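(* Let $m$ and $n$ be relatively prime positive integers, and let $(\mathfrak{p}^{(i)}: 0 \le i \le m-1)$ and $(\mathfrak{q}^{(j)}: 0 \le j \le n-1)$ be Smith vectors for $m$ and $n$ respectively. Then, in the group $G(mn)$: (1) for all $i,j$, the order of $\overline{\Psi}_{mn}\big(\mathfrak{p}^{(i)}(\overline{t}^n)\mathfrak{q}^{(j)}(\overline{t}^m)\big)$ is $e_m(i)e_n(j)$; (2) if $\overline{\Psi}_{mn}(\mathfrak{p}^{(i_1)}(\overline{t}^n)\mathfrak{q}^{(j_1)}(\overline{t}^m))$ and $\overline{\Psi}_{mn}(\mathfrak{p}^{(i_2)}(\overline{t}^n)\mathfrak{q}^{(j_2)}(\overline{t}^m))$ are non-zero, then the intersection of the cyclic subgroups they generate is non-trivial if and only if $i_1 = i_2$ and $j_1 = j_2$.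
   Context: For a positive integer $k$, let $\Phi_d$ be the $d$th cyclotomic polynomial and $\Psi_k : \mathbf{Z}[X]/(X^k-1) \to \bigoplus_{d \mid k} \mathbf{Z}[X]/(\Phi_d(X))$ the natural map; $G(k)$ is its cokernel and $\overline{\Psi}_k$ the quotient map $\bigoplus_{d\mid k}\mathbf{Z}[X]/(\Phi_d(X)) \to G(k)$. $A_k$ is the matrix of $\Psi_k$ with respect to the bases $(1,\dots,\overline{X}^{k-1})$ and $(1,\dots,\overline{X}^{\phi(d)-1})$ (summands ordered by increasing $d$), and $e_k(0)\mid\dots\mid e_k(k-1)$ are its (non-negative) elementary divisors. A Smith vector for $k$ is a tuple $(\mathfrak{p}^{(j)}: 0\le j\le k-1)$ in $\bigoplus_{d\mid k}\mathbf{Z}[X]/(\Phi_d(X))$ forming a $\mathbf{Z}$-basis such that for every integer $a$, $a\mathfrak{p}^{(j)} \in \operatorname{Im}\Psi_k$ iff $e_k(j)\mid a$. Writing $\mathfrak{p}^{(i)} = \bigoplus_{d_1\mid m}\mathfrak{p}^{(i)}_{d_1}$ and $\mathfrak{q}^{(j)} = \bigoplus_{d_2\mid n}\mathfrak{q}^{(j)}_{d_2}$, the element $\mathfrak{p}^{(i)}(\overline{t}^n)\mathfrak{q}^{(j)}(\overline{t}^m)$ means $\bigoplus_{d_1\mid m,\ d_2\mid n}\mathfrak{p}^{(i)}_{d_1}(t^n)\mathfrak{q}^{(j)}_{d_2}(t^m) \bmod \Phi_{d_1d_2}(t)$, an element of $\bigoplus_{d\mid mn}\mathbf{Z}[t]/(\Phi_d(t))$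 (each $d\mid mn$ being uniquely $d_1d_2$ with $d_1\mid m$, $d_2\mid n$). *)

From HB Require Import structures.
From mathcomp Require Import all_boot all_order all_algebra.
From mathcomp Require Import cyclotomic.
Set Implicit Arguments. Unset Strict Implicit. Unset Printing Implicit Defensive.
Import Order.TTheory GRing.Theory Num.Theory.
Local Open Scope ring_scope.

(* An element of  (+)_{d | k} Z[X]/(Phi_d(X))  is represented by a family of
   integer polynomials x d (a representative of the d-th component); only the
   components with d | k matter, and only modulo Phi_d. *)
Definition elt := nat -> {poly int}.

Definition congPhi (d : nat) (a b : {poly int}) : Prop :=
  exists r : {poly int}, a - b = r * 'Phi_d.

Definition elt_scale (a : int) (x : elt) : elt := fun d => a%:P * x d.
Definition elt_sub (x y : elt) : elt := fun d => x d - y d.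

Definition inImPsi (k : nat) (x : elt) : Prop :=
  exists p : {poly int}, forall d : nat, (d %| k)%N -> congPhi d (x d) p.

Definition elt_eq (k : nat) (x y : elt) : Prop :=
  forall d : nat, (d %| k)%N -> congPhi d (x d) (y d).

Definition elt_comb (k : nat) (c : 'I_k -> int) (v : 'I_k -> elt) : elt :=
  fun d => \sum_(j < k) (c j)%:P * v j d.

Definition is_Z_basis (k : nat) (v : 'I_k -> elt) : Prop :=
  (forall x : elt, exists c : 'I_k -> int, elt_eq k x (elt_comb c v)) /\
  (forall c : 'I_k -> int, elt_eq k (elt_comb c v) (fun _ => 0) ->
     forall j, c j = 0).

(* Index of the target basis: row r corresponds to the basis element
   X^i of the summand Z[X]/(Phi_d), summands ordered by increasing d
   (divisors k is sorted increasingly), i < phi(d). *)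
Fixpoint locate_index (s : seq nat) (r : nat) : nat * nat :=
  match s with
  | [::] => (0%N, 0%N)
  | d :: s' => if (r < totient d)%N then (d, r) else locate_index s' (r - totient d)
  end.

(* The matrix A_k of Psi_k: column j is the image of X^j, row (d,i) its
   coefficient on X^i in Z[X]/(Phi_d). *)
Definition A_mat (k : nat) : 'M[int]_k :=
  \matrix_(r < k, j < k)
     let: (d, i) := locate_index (divisors k) r in (modp 'X^j 'Phi_d)`_i.

Definition elem_div (k : nat) (j : nat) : nat :=
  let: existT2 _ _ (existT2 _ _ (exist2 d _ _)) :=
    int_Smith_normal_form (A_mat k) in absz (nth (0 : int) d j).

Definition smith_vector (k : nat) (v : 'I_k -> elt) : Prop :=
  is_Z_basis v /\
  forall (j : 'I_k) (a : int),
    inImPsi k (elt_scale a (v j)) <-> ((elem_div k j)%:Z %| a)%Z.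

(* p(t^n) q(t^m) in (+)_{d | mn} Z[t]/(Phi_d(t)), d = d1 d2 with
   d1 = gcd(d,m), d2 = gcd(d,n) (m, n coprime). *)
Definition elt_prod (m n : nat) (p q : elt) : elt :=
  fun d => (p (gcdn d m) \Po 'X^n) * (q (gcdn d n) \Po 'X^m).

(* the image of x in G(k) = coker Psi_k has order a
   (the annihilator of the image is aZ). *)
Definition has_order_in_G (k : nat) (x : elt) (a : nat) : Prop :=
  forall b : int, inImPsi k (elt_scale b x) <-> (a%:Z %| b)%Z.

Definition cyclic_inter_nontrivial (k : nat) (x y : elt) : Prop :=
  exists a b : int,
    inImPsi k (elt_sub (elt_scale a x) (elt_scale b y)) /\
    ~ inImPsi k (elt_scale a x).

From HB Require Import structures.
From mathcomp Require Import all_boot all_order all_algebra all_field.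
From mathcomp Require Import ring zify.
Set Implicit Arguments. Unset Strict Implicit. Unset Printing Implicit Defensive.
Import Order.TTheory GRing.Theory Num.Theory.
Local Open Scope ring_scope.

(* Taking coordinates in the bases (X^i)_(i < phi(d)) of the summands identifies
   (+)_(d | k) Z[X]/(Phi_d) with Z^k and Im Psi_k with the column space of A_k.  This has
   full rank: for each d | k some non-zero integer, placed in the d-th summand and 0
   elsewhere, lies in Im Psi_k (a Bezout identity over Q between Phi_d and the other
   cyclotomic factors of X^k - 1).  For a Smith vector p the multiples e_k(j) p_j lie in
   Im Psi_k and, by the Smith normal form of A_k, span a sublattice of the same index, so
   they span Im Psi_k.
   For coprime m, n and d1 | m, d2 | n, Phi_(d1 d2) divides Phi_d1(t^n), so
   (x, y) |-> x(t^n) y(t^m) is well defined.  The mn products p_i(t^n) q_j(t^m) span the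
   free module of rank mn, hence form a basis, and as t^l = t^(an) t^(bm) for suitable a, b,
   Im Psi_mn is spanned by the products e_m(i) e_n(j) p_i(t^n) q_j(t^m).  Both claims are
   read off coordinatewise in this basis. *)

Lemma Cyclotomic_lead_unit d : lead_coef 'Phi_d \is a GRing.unit.
Proof. by rewrite (monicP (Cyclotomic_monic d)) unitr1. Qed.

Lemma Cyclotomic_neq0 d : 'Phi_d != 0.
Proof. exact: monic_neq0 (Cyclotomic_monic d). Qed.

Section CongPhi.

Variable d : nat.

Lemma congPhi_refl a : congPhi d a a.
Proof. by exists 0; rewrite subrr mul0r. Qed.

Lemma congPhi_sym a b : congPhi d a b -> congPhi d b a.
Proof. by case=> r E; exists (- r); rewrite -opprB E mulNr. Qed.

Lemma congPhi_trans a b c : congPhi d a b -> congPhi d b c -> congPhi d a c.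
Proof. by case=> r E [s E']; exists (r + s); rewrite mulrDl -E -E' addrA subrK. Qed.

Lemma congPhiD a b c e : congPhi d a b -> congPhi d c e -> congPhi d (a + c) (b + e).
Proof. by case=> r E [s E']; exists (r + s); rewrite mulrDl -E -E' opprD addrACA. Qed.

Lemma congPhiMl c a b : congPhi d a b -> congPhi d (c * a) (c * b).
Proof. by case=> r E; exists (c * r); rewrite -mulrBr E mulrA. Qed.

Lemma congPhiMr c a b : congPhi d a b -> congPhi d (a * c) (b * c).
Proof. by rewrite ![_ * c]mulrC; apply: congPhiMl. Qed.

Lemma congPhiM a b c e : congPhi d a b -> congPhi d c e -> congPhi d (a * c) (b * e).
Proof. by move=> /(congPhiMr c) Eab /(congPhiMl b); apply: congPhi_trans. Qed.

Lemma congPhi_sum (I : Type) (s : seq I) (P : pred I) (F G : I -> {poly int}) :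
  (forall i, P i -> congPhi d (F i) (G i)) ->
  congPhi d (\sum_(i <- s | P i) F i) (\sum_(i <- s | P i) G i).
Proof.
move=> FG; elim/big_rec2: _ => [|i x y Pi]; first exact: congPhi_refl.
exact: congPhiD (FG i Pi).
Qed.

Lemma congPhi_modp a : congPhi d a (a %% 'Phi_d).
Proof.
by exists (a %/ 'Phi_d); rewrite {1}(Pdiv.IdomainUnit.divp_eq (Cyclotomic_lead_unit d) a) addrK.
Qed.

Lemma congPhiP a b : congPhi d a b <-> a %% 'Phi_d = b %% 'Phi_d.
Proof.
split=> [[r E] | E].
  have -> : a = b + r * 'Phi_d by rewrite -E addrC subrK.
  by rewrite (Pdiv.IdomainUnit.modpD (Cyclotomic_lead_unit d)) modp_mull addr0.
apply: congPhi_trans (congPhi_modp a) _; rewrite E.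
exact/congPhi_sym/congPhi_modp.
Qed.

End CongPhi.

Lemma congPhi_Xn_1 d k : (0 < k)%N -> (d %| k)%N -> congPhi d 'X^k 1.
Proof.
move=> k_gt0 dk; exists (\prod_(j <- rem d (divisors k)) 'Phi_j).
by rewrite -prod_Cyclotomic // (big_rem d) -?dvdn_divisors // mulrC.
Qed.

Lemma congPhi_Xn_modn d k N : (0 < k)%N -> (d %| k)%N -> congPhi d 'X^N 'X^(N %% k).
Proof.
move=> k_gt0 dk; have [r Er] := congPhi_Xn_1 k_gt0 dk.
exists ('X^(N %% k) * (\sum_(i < N %/ k) 'X^k ^+ i) * r).
have -> : 'X^N = 'X^k ^+ (N %/ k) * 'X^(N %% k) :> {poly int}.
  by rewrite -exprM -exprD mulnC -divn_eq.
by rewrite -{2}['X^(N %% k)]mul1r -mulrBl subrX1 Er; ring.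
Qed.

Lemma dvdp_int_monic (a b : {poly int}) : b \is monic ->
  map_poly intr b %| (map_poly intr a : {poly rat}) -> exists r, a = r * b.
Proof.
move=> b_monic ba; have b_unit : lead_coef b \is a GRing.unit by rewrite (monicP b_monic) unitr1.
have Ea := Pdiv.IdomainUnit.divp_eq b_unit a.
exists (a %/ b); suff E0 : a %% b = 0 by rewrite {1}Ea E0 addr0.
have intr_inj : injective (intr : int -> rat) := @intr_inj _.
apply: (map_inj_poly intr_inj (rmorph0 _)); rewrite map_poly0.
move: ba; rewrite {1}Ea rmorphD rmorphM /= dvdp_addr ?dvdp_mull //.
apply: contraTeq => nz; apply/negP => /(dvdp_leq nz).
by rewrite !size_map_inj_poly // leqNgt ltn_modp monic_neq0.
Qed.

(* For a primitive d-th root of unity w, w^n is a primitive (d / gcd(n, d))-th one. *)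
Lemma congPhi_Cyclotomic_comp_Xn d n :
  (0 < d)%N -> congPhi d ('Phi_(d %/ gcdn n d) \Po 'X^n) 0.
Proof.
move=> d_gt0; have [w w_prim] := C_prim_root_exists d_gt0.
have wn_prim := exp_prim_root w_prim n.
have [pw [Epw _] pw_min] := minCpolyP w.
have int_rat_alg (c : {poly int}) :
    map_poly ratr (map_poly (intr : int -> rat) c) = map_poly (intr : int -> algC) c.
  by rewrite -map_poly_comp; apply: eq_map_poly => z /=; apply: ratr_int.
have [|r ->] := dvdp_int_monic (a := 'Phi_(d %/ gcdn n d) \Po 'X^n) (Cyclotomic_monic d).
  2: by exists r; rewrite subr0.
have -> : map_poly (intr : int -> rat) 'Phi_d = pw.
  apply: (map_inj_poly (fmorph_inj (ratr : {rmorphism rat -> algC})) (rmorph0 _)).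
  by rewrite int_rat_alg -Epw (minCpoly_cyclotomic w_prim) (Cintr_Cyclotomic w_prim).
rewrite -pw_min int_rat_alg map_comp_poly map_polyXn /root horner_comp hornerXn.
rewrite (Cintr_Cyclotomic wn_prim).
by have := root_cyclotomic wn_prim (w ^+ n); rewrite wn_prim.
Qed.

Lemma congPhi_comp_Xn d n a b : (0 < d)%N ->
  congPhi (d %/ gcdn n d) a b -> congPhi d (a \Po 'X^n) (b \Po 'X^n).
Proof.
move=> d_gt0 [r Er]; have [s Es] := congPhi_Cyclotomic_comp_Xn n d_gt0.
by exists ((r \Po 'X^n) * s); rewrite -comp_polyB Er comp_polyM -mulrA -Es subr0.
Qed.

Definition totient_sum (s : seq nat) := (\sum_(d <- s) totient d)%N.

Lemma locate_indexP s r : (r < totient_sum s)%N ->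
  ((locate_index s r).1 \in s) && ((locate_index s r).2 < totient (locate_index s r).1)%N.
Proof.
elim: s r => [|d s IHs] r; first by rewrite /totient_sum big_nil.
rewrite /totient_sum big_cons /= => lt_r; case: ifP => [-> | ge_r].
  by rewrite inE eqxx.
have /IHs/andP[in_s ->] : (r - totient d < totient_sum s)%N by rewrite ltn_subLR // leqNgt ge_r.
by rewrite inE in_s orbT.
Qed.

Lemma locate_index_inj s r1 r2 : uniq s ->
  (r1 < totient_sum s)%N -> (r2 < totient_sum s)%N ->
  locate_index s r1 = locate_index s r2 -> r1 = r2.
Proof.
elim: s r1 r2 => [|d s IHs] r1 r2; first by rewrite /totient_sum big_nil.
rewrite /totient_sum big_cons /= => /andP[d_notin s_uniq] lt_r1 lt_r2.
have tail_mem r : (r < totient d + totient_sum s)%N -> (r < totient d)%N = false ->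
    ((locate_index s (r - totient d)).1 \in s) && (r - totient d < totient_sum s)%N.
  move=> lt_r ge_r; have lt_r' : (r - totient d < totient_sum s)%N.
    by rewrite ltn_subLR // leqNgt ge_r.
  by have /andP[-> _] := locate_indexP lt_r'; rewrite lt_r'.
case: ifP => ge1; case: ifP => ge2.
- by case.
- by move=> E; have /andP[] := tail_mem _ lt_r2 ge2; rewrite -E (negPf d_notin).
- by move=> E; have /andP[] := tail_mem _ lt_r1 ge1; rewrite E (negPf d_notin).
have /andP[_ lt1] := tail_mem _ lt_r1 ge1; have /andP[_ lt2] := tail_mem _ lt_r2 ge2.
move/(IHs _ _ s_uniq lt1 lt2)/(congr1 (addn (totient d))).
by rewrite !subnKC // leqNgt ?ge1 ?ge2.
Qed.

Lemma locate_index_surj s d i : d \in s -> (i < totient d)%N ->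
  exists2 r, (r < totient_sum s)%N & locate_index s r = (d, i).
Proof.
elim: s => [|d' s IHs] //; rewrite inE => /orP[/eqP-> | d_in] lt_i.
  by exists i; [rewrite /totient_sum big_cons ltn_addr | rewrite /= lt_i].
have [r lt_r Er] := IHs d_in lt_i.
exists (r + totient d'); first by rewrite /totient_sum big_cons addnC ltn_add2r.
by rewrite /= ltnNge leq_addl /= addnK.
Qed.

Lemma size_prod_Cyclotomic s : size (\prod_(d <- s) 'Phi_d : {poly int}) = (totient_sum s).+1.
Proof.
elim: s => [|d s IHs]; first by rewrite /totient_sum !big_nil size_poly1.
rewrite big_cons size_mul ?Cyclotomic_neq0 -?size_poly_eq0 ?IHs //.
by rewrite size_Cyclotomic /totient_sum big_cons addSn addnS.
Qed.

Lemma totient_sum_divisors k : (0 < k)%N -> totient_sum (divisors k) = k.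
Proof.
move=> k_gt0; have := size_prod_Cyclotomic (divisors k).
by rewrite prod_Cyclotomic // size_XnsubC // => -[].
Qed.

Definition basis_index k r := locate_index (divisors k) r.

Definition elt_single (d0 : nat) (P : {poly int}) : elt :=
  fun d => if d == d0 then P else 0.

Section Coordinates.

Variable k : nat.

Lemma basis_indexP (r : 'I_k) :
  ((basis_index k r).1 %| k)%N /\ ((basis_index k r).2 < totient (basis_index k r).1)%N.
Proof.
have k_gt0 : (0 < k)%N by case: k r => [[]|].
have lt_r : (r < totient_sum (divisors k))%N by rewrite totient_sum_divisors.
by have /andP[d_in ->] := locate_indexP lt_r; rewrite dvdn_divisors.
Qed.

Lemma basis_index_inj : injective (fun r : 'I_k => basis_index k r).
Proof.
move=> r1 r2 E; have k_gt0 : (0 < k)%N by case: k r1 {E r2} => [[]|].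
by apply: val_inj; apply: (locate_index_inj (divisors_uniq k)) E; rewrite totient_sum_divisors.
Qed.

Lemma basis_index_surj d i : (0 < k)%N -> (d %| k)%N -> (i < totient d)%N ->
  exists r : 'I_k, basis_index k r = (d, i).
Proof.
move=> k_gt0; rewrite dvdn_divisors // => d_in lt_i.
have [r lt_r Er] := locate_index_surj d_in lt_i; rewrite totient_sum_divisors // in lt_r.
by exists (Ordinal lt_r).
Qed.

Definition coord (x : elt) : 'cV[int]_k :=
  \col_r (x (basis_index k r).1 %% 'Phi_(basis_index k r).1)`_(basis_index k r).2.

Lemma coord_ext x y : x =1 y -> coord x = coord y.
Proof. by move=> Exy; apply/matrixP => r j; rewrite !mxE Exy. Qed.

Lemma coord_scale a x : coord (elt_scale a x) = a *: coord x.
Proof.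
apply/matrixP => r j; rewrite !mxE /elt_scale mul_polyC.
by rewrite (Pdiv.IdomainUnit.modpZl (Cyclotomic_lead_unit _)) coefZ.
Qed.

Lemma coord_sum (I : Type) (s : seq I) (F : I -> elt) :
  coord (fun d => \sum_(i <- s) F i d) = \sum_(i <- s) coord (F i).
Proof.
apply/matrixP => r j; rewrite summxE mxE; under [RHS]eq_bigr do rewrite mxE.
elim/big_rec2: _ => [|i a b _ <-]; first by rewrite mod0p coef0.
by rewrite (Pdiv.IdomainUnit.modpD (Cyclotomic_lead_unit _)) coefD.
Qed.

Lemma coord_comb n (c : 'I_n -> int) (v : 'I_n -> elt) :
  coord (elt_comb c v) = \sum_j c j *: coord (v j).
Proof.
by rewrite coord_sum; apply: eq_bigr => j _; rewrite -coord_scale.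
Qed.

Lemma coord_eq x y : elt_eq k x y -> coord x = coord y.
Proof.
move=> Exy; apply/matrixP => r j; rewrite !mxE.
by have [/Exy/congPhiP -> _] := basis_indexP r.
Qed.

Lemma coord_inj x y : (0 < k)%N -> coord x = coord y -> elt_eq k x y.
Proof.
move=> k_gt0 Exy d dk; apply/congPhiP/polyP => i.
have [lt_i | ge_i] := ltnP i (totient d).
  have [r Er] := basis_index_surj k_gt0 dk lt_i.
  by have := congr1 (fun M : 'cV_k => M r 0) Exy; rewrite /= !mxE Er.
have small (z : {poly int}) : (size (modp z 'Phi_d) <= i)%N.
  by have := ltn_modp z 'Phi_d; rewrite Cyclotomic_neq0 size_Cyclotomic ltnS => /leq_trans; apply.
by rewrite !nth_default ?small.
Qed.

Definition basis_elt (r : 'I_k) : elt :=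
  elt_single (basis_index k r).1 'X^((basis_index k r).2).

Lemma coord_basis_elt r : coord (basis_elt r) = delta_mx r 0.
Proof.
have [_ lt_i] := basis_indexP r.
apply/matrixP => r' j; rewrite !mxE /basis_elt /elt_single (ord1 j) eqxx andbT.
case: eqP => [Ed | Nd]; last first.
  by rewrite mod0p coef0; case: eqP => // Er; case: Nd; rewrite Er.
rewrite Ed modp_small ?size_polyXn ?size_Cyclotomic ?ltnS // coefXn.
suff -> : ((basis_index k r').2 == (basis_index k r).2) = (r' == r) by [].
apply/eqP/eqP => [Ei | -> //]; apply: basis_index_inj.
by rewrite [basis_index k r]surjective_pairing [basis_index k r']surjective_pairing Ed Ei.
Qed.

End Coordinates.

Section EltEq.

Variable k : nat.

Lemma elt_eq_ext x y : x =1 y -> elt_eq k x y.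
Proof. by move=> Exy d _; rewrite Exy; apply: congPhi_refl. Qed.

Lemma elt_eq_sym x y : elt_eq k x y -> elt_eq k y x.
Proof. by move=> Exy d dk; apply/congPhi_sym/Exy. Qed.

Lemma elt_eq_trans x y z : elt_eq k x y -> elt_eq k y z -> elt_eq k x z.
Proof. by move=> Exy Eyz d dk; apply: congPhi_trans (Exy d dk) (Eyz d dk). Qed.

Lemma elt_eq_comb n (c : 'I_n -> int) (u v : 'I_n -> elt) :
  (forall j, elt_eq k (u j) (v j)) -> elt_eq k (elt_comb c u) (elt_comb c v).
Proof. by move=> Euv d dk; apply: congPhi_sum => j _; apply/congPhiMl/Euv. Qed.

Lemma inImPsi_eq x y : elt_eq k x y -> inImPsi k x -> inImPsi k y.
Proof.
move=> Exy [P xP]; exists P => d dk.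
exact: congPhi_trans (congPhi_sym (Exy d dk)) (xP d dk).
Qed.

Lemma inImPsiMl c x : inImPsi k x -> inImPsi k (fun d => c * x d).
Proof. by case=> P xP; exists (c * P) => d dk; apply/congPhiMl/xP. Qed.

End EltEq.

Definition elt_const (P : {poly int}) : elt := fun=> P.

Lemma elt_const_comb_Xn P :
  elt_const P =1 elt_comb (fun l : 'I_(size P) => P`_l) (fun l => elt_const 'X^l).
Proof.
move=> d; rewrite /elt_const /elt_comb -{1}(coefK P) poly_def.
by apply: eq_bigr => l _; rewrite mul_polyC.
Qed.

Section ImagePsi.

Variable k : nat.
Hypothesis k_gt0 : (0 < k)%N.

Lemma A_mat_entry (r j : 'I_k) : A_mat k r j = coord k (elt_const 'X^j) r 0.
Proof. by rewrite !mxE /basis_index; case: locate_index. Qed.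

Lemma A_mat_delta (j : 'I_k) : A_mat k *m delta_mx j 0 = coord k (elt_const 'X^j).
Proof.
apply/matrixP => r i; rewrite (ord1 i) mxE (bigD1 j) //= big1 => [|j' /negPf Nj].
  by rewrite [delta_mx _ _ _ _]mxE eqxx mulr1 addr0 A_mat_entry.
by rewrite [delta_mx _ _ _ _]mxE Nj mulr0.
Qed.

Lemma A_mat_mul (w : 'cV_k) :
  A_mat k *m w = coord k (elt_const (\sum_(j < k) (w j 0)%:P * 'X^j)).
Proof.
rewrite (coord_ext _ (_ : _ =1 elt_comb (fun j => w j 0) (fun j => elt_const 'X^j))) //.
rewrite coord_comb; apply/matrixP => r i; rewrite (ord1 i) mxE summxE.
by apply: eq_bigr => j _; rewrite A_mat_entry !mxE mulrC.
Qed.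

Lemma inImPsiP x : inImPsi k x <-> exists w, coord k x = A_mat k *m w.
Proof.
split=> [[P xP] | [w Ew]]; last first.
  by exists (\sum_(j < k) (w j 0)%:P * 'X^j); apply: coord_inj; rewrite // Ew A_mat_mul.
exists (\sum_(i < size P) P`_i *: delta_mx (Ordinal (ltn_pmod i k_gt0)) 0).
rewrite (coord_eq (xP : elt_eq k x (elt_const P))) mulmx_sumr.
rewrite (coord_ext _ (elt_const_comb_Xn P)) coord_comb.
apply: eq_bigr => i _; rewrite -scalemxAr A_mat_delta.
by congr (_ *: _); apply/coord_eq => d dk; apply: congPhi_Xn_modn.
Qed.

End ImagePsi.

Local Notation ZtoQ := (intr : int -> rat).

(* Phi_d and the product of the other Phi_d' (d' | k) are coprime over Q, since X^k - 1
   is separable; clearing denominators in a Bezout identity gives the integer N. *)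
Lemma inImPsi_single_const k d : (0 < k)%N -> (d %| k)%N ->
  exists2 N : int, N != 0 & inImPsi k (elt_single d N%:P).
Proof.
move=> k_gt0; rewrite dvdn_divisors // => d_in.
set F := \prod_(j <- rem d (divisors k)) 'Phi_j.
have EF : 'X^k - 1 = 'Phi_d * F by rewrite -prod_Cyclotomic // (big_rem d).
have sep : separable_poly ('X^k - 1 : {poly rat}).
  by apply: separable_Xn_sub_1; rewrite pnatr_eq0 -lt0n.
have cop : coprimep (map_poly ZtoQ 'Phi_d) (map_poly ZtoQ F).
  apply: (separable_coprime sep); rewrite -rmorphM -EF rmorphB rmorph1 /=.
  by rewrite map_polyXn dvdpp.
have [[u v] /= Buv] := Bezout_eq1_coprimepP _ _ cop.
have [qu [au au_neq0 Eu]] := rat_poly_scale u.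
have [qv [av av_neq0 Ev]] := rat_poly_scale v.
have clear_denom (q : {poly int}) (a : int) (r : {poly rat}) : a != 0 ->
    r = a%:~R^-1 *: map_poly ZtoQ q -> map_poly ZtoQ q = (a%:~R)%:P * r.
  by move=> a_neq0 ->; rewrite -mul_polyC mulrA -polyCM mulfV ?intr_eq0 // mul1r.
have Bint : (av%:P * qu) * 'Phi_d + (au%:P * qv) * F = (au * av)%:P.
  apply: (map_inj_poly (intr_inj : injective ZtoQ) (rmorph0 _)).
  rewrite rmorphD !rmorphM /= !map_polyC /=.
  rewrite (clear_denom _ _ _ au_neq0 Eu) (clear_denom _ _ _ av_neq0 Ev).
  transitivity ((au%:~R)%:P * (av%:~R)%:P *
     (u * map_poly ZtoQ 'Phi_d + v * map_poly ZtoQ F)); first ring.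
  by rewrite Buv mulr1.
exists (au * av); first by rewrite mulf_neq0.
exists ((au%:P * qv) * F) => d' d'k; rewrite /elt_single.
have [-> | d'_neq_d] := eqVneq d' d.
  by exists (av%:P * qu); rewrite -Bint; ring.
rewrite dvdn_divisors // in d'k.
have d'_in : d' \in rem d (divisors k).
  by rewrite mem_rem_uniq ?divisors_uniq // inE d'_neq_d.
exists (- (au%:P * qv * \prod_(j <- rem d' (rem d (divisors k))) 'Phi_j)).
by rewrite /F (big_rem d') //=; ring.
Qed.

Lemma scaled_delta_in_colspan_A_mat k (r : 'I_k) :
  exists2 N : int, N != 0 & exists w : 'cV_k, A_mat k *m w = N *: delta_mx r 0.
Proof.
have k_gt0 : (0 < k)%N by case: k r => [[]|].
have [dk _] := basis_indexP r.
have [N N_neq0 /(inImPsiMl 'X^((basis_index k r).2)) Nr_in] := inImPsi_single_const k_gt0 dk.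
exists N => //; have [w Ew] := (inImPsiP k_gt0 _).1 Nr_in.
exists w; rewrite -Ew -coord_basis_elt -coord_scale; apply: coord_ext => d.
by rewrite /elt_scale /basis_elt /elt_single; case: eqP; rewrite ?mulr0 // mulrC.
Qed.

Lemma det_A_mat_neq0 k : \det (A_mat k) != 0.
Proof.
have /fin_all_exists[Nw ENw] (r : 'I_k) : exists Nw : int * 'cV[int]_k,
    (Nw.1 != 0) /\ A_mat k *m Nw.2 = Nw.1 *: delta_mx r 0.
  by have [N N_neq0 [w Ew]] := scaled_delta_in_colspan_A_mat r; exists (N, w).
pose W : 'M[int]_k := \matrix_(i, r) (Nw r).2 i 0.
have AW : A_mat k *m W = diag_mx (\row_r (Nw r).1).
  apply/matrixP => i r; have [_ /(congr1 (fun M : 'cV_k => M i 0))] := ENw r.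
  rewrite /= !mxE eqxx andbT mulr_natr => Ei.
  have -> : (Nw i).1 *+ (i == r) = (Nw r).1 *+ (i == r) by case: eqP => [->|].
  by rewrite -Ei; apply: eq_bigr => j _; rewrite !mxE.
have /eqP := congr1 determinant AW; rewrite det_mulmx det_diag.
apply: contraTneq => ->; rewrite mul0r eq_sym prodf_seq_neq0.
by apply/allP => r _; rewrite mxE; have [] := ENw r.
Qed.

Lemma A_mat_smith k : exists (L R : 'M[int]_k) (d : seq int),
  [/\ L \in unitmx, R \in unitmx,
      A_mat k = L *m diag_mx (\row_i d`_i) *m R &
      forall j, elem_div k j = absz d`_j].
Proof.
rewrite /elem_div; case: int_Smith_normal_form => L L_unit [R R_unit [d _ EA]].
exists L, R, d; split => //; rewrite EA; congr (_ *m _ *m _).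
by apply/matrixP => i j; rewrite !mxE.
Qed.

Lemma unitmx_diag_absz_cancel n (T C : 'M[int]_n) (d : 'rV[int]_n) :
  T \in unitmx -> (forall i, d 0 i != 0) ->
  T *m diag_mx (\row_i (absz (d 0 i))%:Z) = diag_mx d *m C -> C \in unitmx.
Proof.
move=> T_unit d_neq0 /(congr1 determinant); rewrite !det_mulmx !det_diag.
have -> : \prod_i (\row_i (absz (d 0 i))%:Z) 0 i = \prod_i sgz (d 0 i) * \prod_i d 0 i.
  by rewrite -big_split; apply: eq_bigr => i _; rewrite mxE abszEsg.
have d_prod_neq0 : \prod_i d 0 i != 0 by apply/prodf_neq0 => i _.
move=> Edet; rewrite unitmxE; have -> : \det C = \det T * \prod_i sgz (d 0 i).
  by apply: (mulIf d_prod_neq0); rewrite mulrC -Edet mulrA.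
rewrite unitrM -unitmxE T_unit /=; apply/unitr_prod => i _.
by case: sgzP (d_neq0 i); rewrite ?unitr1 ?unitrN1.
Qed.

Section SmithVector.

Variables (k : nat) (p : 'I_k -> elt).

Definition coord_mx : 'M[int]_k := \matrix_(r, j) coord k (p j) r 0.

Lemma coord_comb_mx (c : 'I_k -> int) : coord k (elt_comb c p) = coord_mx *m \col_j c j.
Proof.
rewrite coord_comb; apply/matrixP => i j; rewrite !mxE summxE.
by apply: eq_bigr => l _; rewrite !mxE mulrC.
Qed.

Lemma coord_mx_unit : is_Z_basis p -> coord_mx \in unitmx.
Proof.
case=> p_span _; have /fin_all_exists[c Ec] (r : 'I_k) := p_span (basis_elt r).
suff /mulmx1_unit[] : coord_mx *m \matrix_(j, r) c r j = 1%:M by [].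
apply/matrixP => i r; have /matrixP/(_ i 0) := coord_eq (Ec r).
rewrite coord_basis_elt coord_comb_mx !mxE eqxx andbT => ->.
by apply: eq_bigr => j _; rewrite !mxE.
Qed.

(* The elements e_k(j) p_j lie in Im Psi_k and span a sublattice of the same index
   |det A_k|, hence they span Im Psi_k. *)
Lemma inImPsi_smith_span x : (0 < k)%N -> smith_vector p -> inImPsi k x ->
  exists c : 'I_k -> int, elt_eq k x (elt_comb (fun j => (elem_div k j)%:Z * c j) p).
Proof.
move=> k_gt0 [p_basis p_smith] /(inImPsiP k_gt0)[w Ew].
have [L [R [d [L_unit R_unit EA Ed]]]] := A_mat_smith k.
pose D : 'M[int]_k := diag_mx (\row_i d`_i).
pose E : 'M[int]_k := diag_mx (\row_i (elem_div k i)%:Z).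
have d_neq0 (i : 'I_k) : d`_i != 0.
  apply: contra_neq (det_A_mat_neq0 k) => di0.
  by rewrite EA !det_mulmx det_diag (bigD1 i) //= mxE di0 !mul0r mulr0 mul0r.
have /fin_all_exists[v Ev] (j : 'I_k) :
    exists v, coord k (elt_scale (elem_div k j)%:Z (p j)) = A_mat k *m v.
  by apply/(inImPsiP k_gt0)/p_smith.
pose C : 'M[int]_k := \matrix_(l, j) (R *m v j) l 0.
have PEC : coord_mx *m E = L *m D *m C.
  apply/matrixP => i j.
  have -> : (coord_mx *m E) i j = coord k (elt_scale (elem_div k j)%:Z (p j)) i 0.
    by rewrite mul_mx_diag coord_scale !mxE mulrC.
  by rewrite Ev EA -mulmxA [RHS]mxE [LHS]mxE; apply: eq_bigr => l _; rewrite [C _ _]mxE.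
have C_unit : C \in unitmx.
  apply: (@unitmx_diag_absz_cancel _ (invmx L *m coord_mx) _ (\row_i d`_i)).
  - by rewrite unitmx_mul unitmx_inv L_unit coord_mx_unit.
  - by move=> i; rewrite mxE.
  - have -> : diag_mx (\row_i (absz ((\row_i d`_i) 0 i))%:Z) = E.
      by congr diag_mx; apply/matrixP => i j; rewrite !mxE Ed.
    by rewrite -mulmxA PEC -!mulmxA mulKmx.
pose c := invmx C *m (R *m w).
exists (fun j => c j 0); apply: coord_inj => //; rewrite Ew coord_comb_mx.
have -> : \col_j ((elem_div k j)%:Z * c j 0) = E *m c.
  by apply/matrixP => i j; rewrite (ord1 j) mul_diag_mx !mxE.
by rewrite mulmxA PEC EA /c !mulmxA mulmxK.
Qed.

End SmithVector.

Lemma mul_gcdn_coprime m n d : coprime m n -> (d %| m * n)%N -> (gcdn d m * gcdn d n)%N = d.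
Proof.
move=> mn_coprime d_dvd; apply/eqP; rewrite eqn_dvd; apply/andP; split.
  rewrite Gauss_dvd ?dvdn_gcdl //; apply: coprime_dvdl (dvdn_gcdr d m) _.
  by rewrite coprime_sym; apply: coprime_dvdl (dvdn_gcdr d n) _; rewrite coprime_sym.
by rewrite muln_gcdl !muln_gcdr !dvdn_gcd d_dvd !(dvdn_mulr _ (dvdnn d)) (dvdn_mull _ (dvdnn d)).
Qed.

Section ProductsCoprime.

Variables m n : nat.
Hypotheses (m_gt0 : (0 < m)%N) (n_gt0 : (0 < n)%N) (mn_coprime : coprime m n).

Let mn_gt0 : (0 < m * n)%N. Proof. by rewrite muln_gt0 m_gt0. Qed.

Lemma elt_prod_eq x x' y y' : elt_eq m x x' -> elt_eq n y y' ->
  elt_eq (m * n) (elt_prod m n x y) (elt_prod m n x' y').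
Proof.
move=> Ex Ey d d_dvd; have d_gt0 : (0 < d)%N := dvdn_gt0 mn_gt0 d_dvd.
have Ed := mul_gcdn_coprime mn_coprime d_dvd.
apply: congPhiM; apply: congPhi_comp_Xn => //.
  by rewrite gcdnC -{1}Ed mulnK ?gcdn_gt0 ?d_gt0 //; apply/Ex/dvdn_gcdr.
by rewrite gcdnC -{1}Ed mulKn ?gcdn_gt0 ?d_gt0 //; apply/Ey/dvdn_gcdr.
Qed.

Lemma coprime_modn_comb i : exists a b : nat, ((n * a + m * b) %% (m * n) = i %% (m * n))%N.
Proof.
have [u u' Eu _] := @egcdnP n m n_gt0; have [v v' Ev _] := @egcdnP m n m_gt0.
rewrite gcdnC (eqP mn_coprime) in Eu; rewrite (eqP mn_coprime) in Ev.
exists (i * u)%N, (i * v)%N; apply/eqP; rewrite chinese_remainder //; apply/andP; split.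
  have -> : (n * (i * u) + m * (i * v) = (i * u' + i * v) * m + i)%N by nia.
  by rewrite modnMDl.
have -> : (n * (i * u) + m * (i * v) = (i * u + i * v') * n + i)%N by nia.
by rewrite modnMDl.
Qed.

Lemma Xn_as_elt_prod i : exists a b : nat,
  elt_eq (m * n) (elt_const 'X^i) (elt_prod m n (elt_const 'X^a) (elt_const 'X^b)).
Proof.
have [a [b Eab]] := coprime_modn_comb i; exists a, b => d d_dvd.
rewrite /elt_prod /elt_const !comp_Xn_poly -!exprM -exprD.
apply: congPhi_trans (congPhi_Xn_modn _ mn_gt0 d_dvd) _; rewrite -Eab.
exact/congPhi_sym/congPhi_Xn_modn.
Qed.

Variables (p : 'I_m -> elt) (q : 'I_n -> elt).

Definition tensor_comb (C : 'M[int]_(m, n)) : elt :=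
  fun d => \sum_i \sum_j (C i j)%:P * elt_prod m n (p i) (q j) d.

Lemma elt_prod_comb c g :
  elt_prod m n (elt_comb c p) (elt_comb g q) =1 tensor_comb (\matrix_(i, j) (c i * g j)).
Proof.
move=> d; rewrite /elt_prod /elt_comb !linear_sum mulr_suml; apply: eq_bigr => i _.
rewrite mulr_sumr; apply: eq_bigr => j _.
by rewrite mxE !mul_polyC !linearZ /= -!mul_polyC polyCM /elt_prod; ring.
Qed.

Lemma comb_tensor_comb K (c : 'I_K -> int) (C : 'I_K -> 'M[int]_(m, n)) :
  elt_comb c (fun r => tensor_comb (C r)) =1 tensor_comb (\sum_r c r *: C r).
Proof.
move=> d; rewrite /elt_comb /tensor_comb.
under eq_bigr do rewrite mulr_sumr; rewrite exchange_big; apply: eq_bigr => i _.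
under eq_bigr do rewrite mulr_sumr; rewrite exchange_big; apply: eq_bigr => j _.
rewrite summxE rmorph_sum mulr_suml; apply: eq_bigr => r _.
by rewrite !mxE /= polyCM mulrA.
Qed.

Lemma elt_prod_scale a b x y :
  elt_prod m n (elt_scale a x) (elt_scale b y) =1 elt_scale (a * b) (elt_prod m n x y).
Proof. by move=> d; rewrite /elt_prod /elt_scale !comp_polyM !comp_polyC polyCM; ring. Qed.

Lemma tensor_combB C C' d : tensor_comb (C - C') d = tensor_comb C d - tensor_comb C' d.
Proof.
rewrite /tensor_comb -sumrB; apply: eq_bigr => i _; rewrite -sumrB.
by apply: eq_bigr => j _; rewrite !mxE polyCB mulrBl.
Qed.

Lemma tensor_comb_delta b i0 j0 :
  tensor_comb (b *: delta_mx i0 j0) =1 elt_scale b (elt_prod m n (p i0) (q j0)).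
Proof.
move=> d; rewrite /tensor_comb (bigD1 i0) //= (bigD1 j0) //= !mxE !eqxx mulr1.
rewrite !big1 ?addr0 // => [i /negPf Ni | j /negPf Nj].
  by rewrite big1 // => j _; rewrite !mxE Ni mulr0 mul0r.
by rewrite !mxE Nj andbF mulr0 mul0r.
Qed.

Lemma basis_elt_tensor_span : is_Z_basis p -> is_Z_basis q ->
  forall r : 'I_(m * n), exists C, elt_eq (m * n) (basis_elt r) (tensor_comb C).
Proof.
move=> [p_span _] [q_span _] r; have [d_dvd _] := basis_indexP r.
set d := (basis_index _ r).1 in d_dvd *.
have [a [b Eab]] := Xn_as_elt_prod (basis_index (m * n) r).2.
have [c Ec] := p_span (elt_single (gcdn d m) 'X^a).
have [g Eg] := q_span (elt_single (gcdn d n) 'X^b).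
exists (\matrix_(i, j) (c i * g j)).
apply: (elt_eq_trans _ (elt_eq_trans (elt_prod_eq Ec Eg) (elt_eq_ext (elt_prod_comb c g)))).
move=> e e_dvd; rewrite /basis_elt /elt_prod /elt_single -/d.
have [-> | Ned] := eqVneq e d; first by rewrite !eqxx; apply: Eab.
case: eqP => [Em | _]; last by rewrite comp_poly0 mul0r; apply: congPhi_refl.
case: eqP => [En | _]; last by rewrite comp_poly0 mulr0; apply: congPhi_refl.
by case/eqP: Ned; rewrite -(mul_gcdn_coprime mn_coprime e_dvd) Em En mul_gcdn_coprime.
Qed.

(* Column [s = mxvec_index i j] holds the coordinates of [p i (t^n) q j (t^m)]. *)
Definition tensor_coord_mx : 'M[int]_(m * n) :=
  \matrix_(r, s) mxvec (\matrix_(i, j) coord (m * n) (elt_prod m n (p i) (q j)) r 0) 0 s.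

Lemma coord_tensor_comb C :
  coord (m * n) (tensor_comb C) = tensor_coord_mx *m (mxvec C)^T.
Proof.
rewrite coord_sum; under eq_bigr do rewrite coord_sum.
apply/matrixP => r z; rewrite summxE; under eq_bigr do rewrite summxE.
rewrite mxE pair_big /= (reindex _ (curry_mxvec_bij _ _)) /=.
by apply: eq_bigr => -[i j] _; rewrite (ord1 z) coord_scale !mxE !mxvecE !mxE mulrC.
Qed.

Lemma tensor_coord_mx_unit : is_Z_basis p -> is_Z_basis q -> tensor_coord_mx \in unitmx.
Proof.
move=> p_basis q_basis.
have /fin_all_exists[C EC] := basis_elt_tensor_span p_basis q_basis.
suff /mulmx1_unit[] : tensor_coord_mx *m \matrix_(s, r) (mxvec (C r))^T s 0 = 1%:M by [].
apply/matrixP => i r; have /matrixP/(_ i 0) := coord_eq (EC r).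
rewrite coord_basis_elt coord_tensor_comb !mxE eqxx andbT => ->.
by apply: eq_bigr => s _; rewrite !mxE.
Qed.

Lemma tensor_comb_inj C C' : is_Z_basis p -> is_Z_basis q ->
  elt_eq (m * n) (tensor_comb C) (tensor_comb C') -> C = C'.
Proof.
move=> p_basis q_basis /coord_eq; rewrite !coord_tensor_comb.
move/(congr1 (mulmx (invmx tensor_coord_mx))); rewrite !mulKmx ?tensor_coord_mx_unit //.
by move/(congr1 trmx); rewrite !trmxK => /(can_inj mxvecK).
Qed.

Lemma inImPsi_elt_prod x y : inImPsi m x -> inImPsi n y -> inImPsi (m * n) (elt_prod m n x y).
Proof.
move=> [P xP] [Q yQ]; apply: inImPsi_eq (elt_eq_sym (elt_prod_eq xP yQ)) _.
by exists ((P \Po 'X^n) * (Q \Po 'X^m)) => d _; apply: congPhi_refl.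
Qed.

End ProductsCoprime.

Section SmithProducts.

Variables (m n : nat) (p : 'I_m -> elt) (q : 'I_n -> elt).
Hypotheses (m_gt0 : (0 < m)%N) (n_gt0 : (0 < n)%N) (mn_coprime : coprime m n).
Hypotheses (p_smith : smith_vector p) (q_smith : smith_vector q).

Let e (i : 'I_m) (j : 'I_n) : int := (elem_div m i * elem_div n j)%N%:Z.

Lemma inImPsi_tensor_span x : inImPsi (m * n) x ->
  exists C : 'M[int]_(m, n), elt_eq (m * n) x (tensor_comb p q (\matrix_(i, j) (e i j * C i j))).
Proof.
move=> [P xP].
have /fin_all_exists[D ED] (l : 'I_(size P)) :
    exists D : 'M[int]_(m, n),
      elt_eq (m * n) (elt_const 'X^l) (tensor_comb p q (\matrix_(i, j) (e i j * D i j))).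
  have [a [b Eab]] := Xn_as_elt_prod m_gt0 n_gt0 mn_coprime l.
  have const_in k a' : inImPsi k (elt_const 'X^a') by exists 'X^a' => d _; apply: congPhi_refl.
  have [c Ec] := inImPsi_smith_span m_gt0 p_smith (const_in m a).
  have [g Eg] := inImPsi_smith_span n_gt0 q_smith (const_in n b).
  exists (\matrix_(i, j) (c i * g j)).
  apply: elt_eq_trans Eab (elt_eq_trans (elt_prod_eq m_gt0 n_gt0 mn_coprime Ec Eg) _).
  apply/elt_eq_ext => d; rewrite elt_prod_comb; congr (tensor_comb p q _ d).
  by apply/matrixP => i j; rewrite !mxE /e PoszM; ring.
exists (\sum_(l < size P) P`_l *: D l).
apply: elt_eq_trans (xP : elt_eq _ x (elt_const P)) _.
apply: elt_eq_trans (elt_eq_ext (elt_const_comb_Xn P)) _.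
apply: elt_eq_trans (elt_eq_comb _ ED) _.
apply/elt_eq_ext => d; rewrite comb_tensor_comb; congr (tensor_comb p q _ d).
apply/matrixP => i j; rewrite !mxE !summxE mulr_sumr.
by apply: eq_bigr => l _; rewrite !mxE mulrCA.
Qed.

Lemma inImPsi_tensor_comb_dvd C i j :
  inImPsi (m * n) (tensor_comb p q C) -> (e i j %| C i j)%Z.
Proof.
have [[p_basis _] [q_basis _]] := (p_smith, q_smith).
case/inImPsi_tensor_span => C' /(tensor_comb_inj m_gt0 n_gt0 mn_coprime p_basis q_basis) ->.
by rewrite mxE dvdz_mulr.
Qed.

Lemma inImPsi_scale_elt_prod i j b :
  (e i j %| b)%Z -> inImPsi (m * n) (elt_scale b (elt_prod m n (p i) (q j))).
Proof.
case/dvdzP=> t ->; have [_ p_dvd] := p_smith; have [_ q_dvd] := q_smith.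
have p_in : inImPsi m (elt_scale (t * (elem_div m i)%:Z) (p i)) by apply/p_dvd/dvdz_mull.
have q_in : inImPsi n (elt_scale (elem_div n j)%:Z (q j)) by apply/q_dvd.
apply: inImPsi_eq (inImPsi_elt_prod m_gt0 n_gt0 mn_coprime p_in q_in).
by apply/elt_eq_ext => d; rewrite elt_prod_scale /e PoszM mulrA.
Qed.

Lemma has_order_in_G_elt_prod i j :
  has_order_in_G (m * n) (elt_prod m n (p i) (q j)) (elem_div m i * elem_div n j).
Proof.
move=> b; split; last exact: inImPsi_scale_elt_prod.
move/(inImPsi_eq (elt_eq_sym (elt_eq_ext (tensor_comb_delta p q b i j)))).
by move/(inImPsi_tensor_comb_dvd i j); rewrite !mxE !eqxx mulr1.
Qed.

Lemma cyclic_inter_nontrivial_elt_prod i1 i2 j1 j2 :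
  ~ inImPsi (m * n) (elt_prod m n (p i2) (q j2)) ->
  cyclic_inter_nontrivial (m * n) (elt_prod m n (p i1) (q j1)) (elt_prod m n (p i2) (q j2))
  <-> i1 = i2 /\ j1 = j2.
Proof.
move=> N2; split=> [[a [b [Eab Na]]] | [-> ->]]; last first.
  exists 1, 1; split; first by exists 0 => d _; rewrite /elt_sub subrr; apply: congPhi_refl.
  by apply: contra_not N2; apply/inImPsi_eq/elt_eq_ext => d; rewrite /elt_scale mul1r.
have [[-> ->] // | Nij] := eqVneq (i1, j1) (i2, j2); case: Na.
apply: inImPsi_scale_elt_prod.
suff: inImPsi (m * n) (tensor_comb p q (a *: delta_mx i1 j1 - b *: delta_mx i2 j2)).
  move/(inImPsi_tensor_comb_dvd i1 j1).
  by rewrite !mxE !eqxx -xpair_eqE (negPf Nij) !mulr0 !mulr1 subr0.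
apply: inImPsi_eq Eab; apply/elt_eq_sym/elt_eq_ext => d.
by rewrite tensor_combB !tensor_comb_delta.
Qed.

End SmithProducts.

Theorem lemma3p3 (m n : nat) (Hm : (0 < m)%N) (Hn : (0 < n)%N)
  (Hmn : coprime m n) (p : 'I_m -> elt) (q : 'I_n -> elt)
  (Hp : smith_vector p) (Hq : smith_vector q) :
  (forall (i : 'I_m) (j : 'I_n),
     has_order_in_G (m * n) (elt_prod m n (p i) (q j))
       (elem_div m i * elem_div n j)) /\
  (forall (i1 i2 : 'I_m) (j1 j2 : 'I_n),
     ~ inImPsi (m * n) (elt_prod m n (p i1) (q j1)) ->
     ~ inImPsi (m * n) (elt_prod m n (p i2) (q j2)) ->
     (cyclic_inter_nontrivial (m * n) (elt_prod m n (p i1) (q j1))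
                                      (elt_prod m n (p i2) (q j2))
      <-> i1 = i2 /\ j1 = j2)).
Proof.
split=> [i j | i1 i2 j1 j2 _].
  exact: has_order_in_G_elt_prod.
exact: cyclic_inter_nontrivial_elt_prod.
Qed.
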